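(* Let $(A,W)$ be a Pratt comonoid, let $x_0\supseteq x_1\supseteq\cdots$ be an $\omega$-indexed descending chain of elements of $W$, and let $y_0\subseteq y_1\subseteq\cdots$ be an $\omega$-indexed ascending chain of elements of $W$. Suppose that $\bigcap_{m\in\omega}x_m=\emptyset$, and that for no pair $(m,n)\in\omega\times\omega$ does $y_n$ contain $x_m\cap\bigcup_{i\in\omega}y_i$. Then $W$ has at least continuum cardinality; in fact $W$ contains a complete sublattice isomorphic to the lattice of all subsets of $\omega$.
   Context: A Pratt comonoid is a pair $(A,W)$ where $A$ is a set and $W$ is a set of subsets of $A$ such that (i) $\emptyset\in W$ and $A\in W$; (ii) whenever $C\subseteq A\times A$ is such that for every $a\in A$ both the $a$-th row $\{b\mid (a,b)\in C\}$ and the $a$-th column $\{b\mid (b,a)\in C\}$ belong to $W$ (a crossword over $W$), the diagonal $\{b\mid (b,b)\in C\}$ also belongs to $W$. A complete sublattice of $W$ is a subset of $W$ closed under arbitrary (possibly infinite) unions and intersections taken in the power set of $A$, not necessarily containing $\emptyset$ or $A$. *)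

From mathcomp Require Export all_boot.
From mathcomp Require Export boolp classical_sets.
Set Implicit Arguments. Unset Strict Implicit. Unset Printing Implicit Defensive.
Local Open Scope classical_set_scope.

Definition crow (A : Type) (C : set (A * A)) (a : A) : set A := [set b | C (a, b)].
Definition ccol (A : Type) (C : set (A * A)) (a : A) : set A := [set b | C (b, a)].
Definition cdiag (A : Type) (C : set (A * A)) : set A := [set b | C (b, b)].

Definition crossword (A : Type) (W : set (set A)) (C : set (A * A)) : Prop :=
  forall a, W (crow C a) /\ W (ccol C a).

Definition pratt_comonoid (A : Type) (W : set (set A)) : Prop :=
  [/\ W set0, W setT &
      forall C : set (A * A), crossword W C -> W (cdiag C)].

Definition complete_sublattice (A : Type) (W S : set (set A)) : Prop :=
  S `<=` W /\
  forall F : set (set A), F `<=` S -> F !=set0 ->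
    S (\bigcup_(X in F) X) /\ S (\bigcap_(X in F) X).

(* S (ordered by inclusion) is order-isomorphic (hence lattice-isomorphic)
   to the power set of omega. *)
Definition iso_to_powerset_nat (A : Type) (S : set (set A)) : Prop :=
  exists phi : set nat -> set A,
    (forall X Y : set nat, phi X `<=` phi Y <-> X `<=` Y) /\
    S = range phi.

From mathcomp Require Import all_boot boolp classical_sets.
Set Implicit Arguments. Unset Strict Implicit. Unset Printing Implicit Defensive.
Local Open Scope classical_set_scope.

(** The Pratt axiom makes [W] closed under finite unions and, more
   importantly, under every union [\bigcup_(j in J) x (p j) `&` y (q j)] of
   "rectangles" cut from the two chains: the crossword [\bigcup_j x (p j) `*`
   y (q j)] has finite unions of [y]'s as rows (because [\bigcap_m x m] is
   empty) and members of the chain [x] as columns.  The hypothesis on [x] and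
   [y] yields points [a k] lying exactly on level [m k] of [x] and level
   [(n k).+1] of [y], with [m] and [n] strictly increasing.  Removing the
   "edge" (the union of the neighbouring rectangles) leaves pairwise disjoint
   cells containing the [a k], so [X |-> \bigcup_(k in X) cell k `|` edge]
   is an embedding of the power set of [nat] into [W] preserving nonempty
   unions and intersections. *)

Section PrattComonoid.
Variables (A : Type) (W : set (set A)).
Hypothesis HW : pratt_comonoid W.

Lemma pratt_setU U V : W U -> W V -> W (U `|` V).
Proof.
case: HW => _ WT Wdiag WU WV.
set C := [set ab : A * A | U ab.1 \/ V ab.2].
have -> : U `|` V = cdiag C by [].
apply: Wdiag => a; split.
- have [Ua|nUa] := pselect (U a).
    by have -> : crow C a = setT by apply/seteqP; split => // b _; left.
  by have -> : crow C a = V by apply/seteqP; split => b //=; [case|right].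
- have [Va|nVa] := pselect (V a).
    by have -> : ccol C a = setT by apply/seteqP; split => // b _; right.
  by have -> : ccol C a = U by apply/seteqP; split => b //=; [case|left].
Qed.

Lemma pratt_bigcup_bounded (F : nat -> set A) (J : set nat) M :
  J `<=` `I_M -> (forall j, J j -> W (F j)) -> W (\bigcup_(j in J) F j).
Proof.
case: HW => W0 _ _.
elim: M J => [|M IH] J JM WF.
  have -> : J = set0 by apply/seteqP; split => // j /JM.
  by rewrite bigcup_set0.
have -> : \bigcup_(j in J) F j =
    \bigcup_(j in J `&` `I_M) F j `|` \bigcup_(j in J `&` [set M]) F j.
  by rewrite -bigcup_setU -setIUr -IIS setIidl.
apply: pratt_setU; first by apply: IH => [j []|j [/WF]].
have [JM'|nJM'] := pselect (J M).
  have -> : J `&` [set M] = [set M] by apply/seteqP; split => [j []|j ->].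
  by rewrite bigcup_set1; apply: WF.
have -> : J `&` [set M] = set0 by apply/seteqP; split => // j [Jj /= Ej]; subst.
by rewrite bigcup_set0.
Qed.

Lemma pratt_bigcup_rect (I : Type) (J : set I) (F G : I -> set A) :
  (forall a, W (\bigcup_(j in [set j | J j /\ F j a]) G j)) ->
  (forall a, W (\bigcup_(j in [set j | J j /\ G j a]) F j)) ->
  W (\bigcup_(j in J) (F j `&` G j)).
Proof.
case: HW => _ _ Wdiag Wrow Wcol.
set C := [set ab : A * A | exists2 j, J j /\ F j ab.1 & G j ab.2].
have -> : \bigcup_(j in J) (F j `&` G j) = cdiag C.
  by apply/seteqP; split => b [j]; [move=> Jj [Fb Gb] | move=> [Jj Fb] Gb]; exists j.
apply: Wdiag => a; split; first exact: Wrow.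
have -> : ccol C a = \bigcup_(j in [set j | J j /\ G j a]) F j.
  by apply/seteqP; split => b [j]; [move=> [Jj Fb] Ga | move=> [Jj Ga] Fb]; exists j.
exact: Wcol.
Qed.

End PrattComonoid.

Lemma nonincreasing_chain (T : Type) (F : nat -> set T) :
  (forall n, F n.+1 `<=` F n) -> {homo F : i j / i <= j >-> j `<=` i}.
Proof.
move=> FS; apply: homo_leq => [X|Y X Z XY YZ|//]; first exact: subset_refl.
exact: subset_trans YZ XY.
Qed.

Lemma nondecreasing_chain (T : Type) (F : nat -> set T) :
  (forall n, F n `<=` F n.+1) -> {homo F : i j / i <= j >-> i `<=` j}.
Proof.
move=> FS; apply: homo_leq => [X|Y X Z|//]; [exact: subset_refl | exact: subset_trans].
Qed.

Lemma bigcup_nonincreasing (T : Type) (F : nat -> set T) (S : set nat) :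
  {homo F : i j / i <= j >-> j `<=` i} -> S !=set0 ->
  exists2 n, S n & \bigcup_(i in S) F i = F n.
Proof.
move=> Fnonincr [n0 Sn0].
have exS : exists n, `[< S n >] by exists n0; apply/asboolP.
case: (ex_minnP exS) => n /asboolP Sn nmin; exists n => //.
apply/seteqP; split => [a [i Si]|a Fna]; last by exists n.
by apply: Fnonincr; apply: nmin; apply/asboolP.
Qed.

Lemma increasing_ge (f : nat -> nat) : {homo f : i j / i < j} -> forall k, k <= f k.
Proof. by move=> f_incr; elim=> // k IH; apply: leq_ltn_trans IH (f_incr _ _ _). Qed.

Lemma exists_boundary (P : nat -> Prop) M K :
  M <= K -> P M -> ~ P K -> exists2 m, M <= m & P m /\ ~ P m.+1.
Proof.
elim: K => [|K IH]; first by rewrite leqn0 => /eqP ->.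
move=> MK' PM nPK; have MK : M <= K.
  by move: MK'; rewrite leq_eqVlt => /orP [/eqP EM|]; [rewrite EM in PM|].
by have [PK|nPK'] := pselect (P K); [exists K | exact: IH].
Qed.

Section Chains.
Variables (A : Type) (x y : nat -> set A).
Hypotheses (x_nonincr : {homo x : i j / i <= j >-> j `<=` i})
  (y_nondecr : {homo y : i j / i <= j >-> i `<=` j}).

Definition layer m n a := x m a /\ ~ x m.+1 a /\ ~ y n a /\ y n.+1 a.

Section Exhaustion.
Hypothesis x_empty : \bigcap_m x m = set0.

Lemma exists_chain_exit a : exists K, ~ x K a.
Proof.
apply: contrapT => /forallNP xa.
have : (\bigcap_m x m) a by move=> m _; apply: contrapT; apply: xa.
by rewrite x_empty.
Qed.

Section PrattChains.
Variable W : set (set A).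
Hypotheses (HW : pratt_comonoid W) (Wx : forall m, W (x m)) (Wy : forall n, W (y n)).

Lemma pratt_bigcup_chains (p q : nat -> nat) (J : set nat) :
  (forall j, j <= p j) -> W (\bigcup_(j in J) (x (p j) `&` y (q j))).
Proof.
move=> p_ge; case: (HW) => W0 _ _.
apply: pratt_bigcup_rect => // a.
  have [M nxMa] := exists_chain_exit a.
  apply: (pratt_bigcup_bounded HW (M := M)) => [j [_ xa]|j _]; last exact: Wy.
  rewrite /= ltnNge; apply/negP => Mj; apply: nxMa.
  exact: (x_nonincr (leq_trans Mj (p_ge j)) xa).
set S := [set j | J j /\ y (q j) a].
have [[j Sj]|/nonemptyPn ->] := pselect (S !=set0); last by rewrite bigcup_set0.
rewrite -(bigcup_image S p x).
have [i _ ->] := bigcup_nonincreasing x_nonincr (ex_intro _ (p j) (imageP p Sj)).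
exact: Wx.
Qed.

End PrattChains.

Hypothesis xy_apart : forall m n : nat, ~ (x m `&` \bigcup_i y i `<=` y n).

Lemma exists_layer_point M N : exists m n a, [/\ M <= m, N <= n & layer m n a].
Proof.
have [a [[xMa [i _ yia]] nyNa]] : exists a, (x M `&` \bigcup_i y i) a /\ ~ y N a.
  by apply: contrapT => /forallNP H; apply: (@xy_apart M N) => a Ha;
    apply: contrapT => nya; apply: (H a).
have [K nxKa] := exists_chain_exit a.
have MK : M <= K.
  by rewrite leqNgt; apply/negP => /ltnW KM; exact: nxKa (x_nonincr KM xMa).
have Ni : N <= i.
  by rewrite leqNgt; apply/negP => /ltnW iN; exact: nyNa (y_nondecr iN yia).
have [m Mm [xma nxma]] := @exists_boundary (x^~ a) _ _ MK xMa nxKa.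
have [n Nn [nyna /contrapT ynSa]] :=
  @exists_boundary (fun n => ~ y n a) _ _ Ni nyNa (@^~ yia).
by exists m, n, a.
Qed.

Lemma exists_layer_sequence : exists (a : nat -> A) (m n : nat -> nat),
  [/\ {homo m : i j / i < j}, {homo n : i j / i < j} &
      forall k, layer (m k) (n k) (a k)].
Proof.
have /choice[g gP] : forall MN : nat * nat, exists t : nat * nat * A,
    [/\ MN.1 <= t.1.1, MN.2 <= t.1.2 & layer t.1.1 t.1.2 t.2].
  by move=> [M N]; have [m [n [a]]] := exists_layer_point M N; exists (m, n, a).
pose t k := iter k (fun t => g ((t.1.1).+1, (t.1.2).+1)) (g (0, 0)).
have step k : [/\ (t k).1.1 < (t k.+1).1.1, (t k).1.2 < (t k.+1).1.2 &
    layer (t k.+1).1.1 (t k.+1).1.2 (t k.+1).2].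
  exact: (gP ((t k).1.1.+1, (t k).1.2.+1)).
exists (fun k => (t k).2), (fun k => (t k).1.1), (fun k => (t k).1.2); split.
- by apply: homo_ltn => [|k]; [exact: ltn_trans | case: (step k)].
- by apply: homo_ltn => [|k]; [exact: ltn_trans | case: (step k)].
- by case=> [|k]; [case: (gP (0, 0)) | case: (step k)].
Qed.

End Exhaustion.

Section Embedding.
Variables m n : nat -> nat.
Hypotheses (m_incr : {homo m : i j / i < j}) (n_incr : {homo n : i j / i < j}).

Definition cell k := x (m k) `&` y (n k).+1.

Definition edge := \bigcup_k (x (m k).+1 `&` y (n k).+1) `|`
                   \bigcup_k (x (m k) `&` y (n k)).

Definition embed (X : set nat) := \bigcup_(k in X) cell k `|` edge.

Lemma cell_unique j k b : cell j b -> cell k b -> ~ edge b -> j = k.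
Proof.
move=> [xjb yjb] [xkb ykb] nedge.
have [jk|kj|//] := ltngtP j k.
- by case: nedge; left; exists j => //; split; first exact: (x_nonincr (m_incr jk) xkb).
- by case: nedge; right; exists j => //; split; last exact: (y_nondecr (n_incr kj) ykb).
Qed.

Lemma layer_cell k b : layer (m k) (n k) b -> cell k b /\ ~ edge b.
Proof.
move=> [xb [nxb [nyb yb]]]; split => //.
have m_le := ltnW_homo m_incr; have n_le := ltnW_homo n_incr.
case=> -[j _ [xjb yjb]].
- have [kj|jk] := leqP k j; last exact/nyb/(y_nondecr (n_incr jk) yjb).
  by apply/nxb/(x_nonincr (_ : (m k).+1 <= (m j).+1) xjb); rewrite ltnS m_le.
- have [jk|kj] := leqP j k; last exact/nxb/(x_nonincr (m_incr kj) xjb).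
  exact/nyb/(y_nondecr (n_le _ _ jk) yjb).
Qed.

Lemma embed_bigcup (G : set (set nat)) : G !=set0 ->
  embed (\bigcup_(X in G) X) = \bigcup_(X in G) embed X.
Proof. by move=> G0; rewrite /embed bigcup_bigcup bigcupUl. Qed.

Lemma embed_bigcap (G : set (set nat)) : G !=set0 ->
  embed (\bigcap_(X in G) X) = \bigcap_(X in G) embed X.
Proof.
move=> [X0 GX0]; apply/seteqP; split => b.
  case=> [[k Gk cellk] X GX|edgeb X _]; last by right.
  by left; exists k => //; apply: Gk.
move=> Gb; have [edgeb|nedge] := pselect (edge b); first by right.
have [[k X0k cellk]|//] := Gb _ GX0.
left; exists k => // X GX; have [[j Xj cellj]|//] := Gb _ GX.
by rewrite (cell_unique cellk cellj nedge).
Qed.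

Hypothesis layer_inhabited : forall k, exists b, layer (m k) (n k) b.

Lemma embed_subset X Y : embed X `<=` embed Y <-> X `<=` Y.
Proof.
split=> [XY k Xk|XY]; last exact/setSU/bigcup_subset.
have [b /layer_cell [cellk nedge]] := layer_inhabited k.
have [[j Yj cellj]|//] := XY b (or_introl (ex_intro2 _ _ k Xk cellk)).
by rewrite (cell_unique cellk cellj nedge).
Qed.

Lemma pratt_embed (W : set (set A)) : pratt_comonoid W ->
  (forall i, W (x i)) -> (forall i, W (y i)) -> \bigcap_i x i = set0 ->
  forall X, W (embed X).
Proof.
move=> HW Wx Wy x_empty X.
have m_ge := increasing_ge m_incr.
apply: (pratt_setU HW); last apply: (pratt_setU HW).
- exact: pratt_bigcup_chains.
- apply: (@pratt_bigcup_chains x_empty W HW Wx Wy (fun k => (m k).+1)) => k.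
  exact: leqW.
- exact: pratt_bigcup_chains.
Qed.

End Embedding.

End Chains.

Lemma complete_sublattice_range (T A : Type) (W : set (set A)) (f : set T -> set A) :
  (forall X, W (f X)) ->
  (forall G, G !=set0 -> f (\bigcup_(X in G) X) = \bigcup_(X in G) f X) ->
  (forall G, G !=set0 -> f (\bigcap_(X in G) X) = \bigcap_(X in G) f X) ->
  complete_sublattice W (range f).
Proof.
move=> Wf f_bigcup f_bigcap; split => [_ [X _ <-] //|F Frange [Z0 FZ0]].
have FE : F = f @` (f @^-1` F).
  by apply/seteqP; split => [Z FZ|Z [X FX <-] //]; have [X _ EX] := Frange Z FZ;
    exists X; rewrite /preimage /= EX.
have G0 : f @^-1` F !=set0.
  by have [X _ EX] := Frange Z0 FZ0; exists X; rewrite /preimage /= EX.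
by rewrite FE bigcup_image bigcap_image -f_bigcup // -f_bigcap.
Qed.

Theorem proposition7p3 (A : Type) (W : set (set A)) (x y : nat -> set A) :
  pratt_comonoid W ->
  (forall m, W (x m)) -> (forall m, x m.+1 `<=` x m) ->
  (forall n, W (y n)) -> (forall n, y n `<=` y n.+1) ->
  \bigcap_m x m = set0 ->
  (forall m n : nat, ~ (x m `&` \bigcup_i y i `<=` y n)) ->
  (exists f : set nat -> set A, injective f /\ forall X, W (f X)) /\
  (exists S : set (set A), complete_sublattice W S /\ iso_to_powerset_nat S).
Proof.
move=> HW Wx Dx Wy Dy x_empty xy_apart.
have x_nonincr := nonincreasing_chain Dx; have y_nondecr := nondecreasing_chain Dy.
have [a [m [n [m_incr n_incr a_layer]]]] :=
  exists_layer_sequence x_nonincr y_nondecr x_empty xy_apart.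
pose f := embed x y m n.
have f_subset : forall X Y, f X `<=` f Y <-> X `<=` Y.
  by apply: embed_subset => // k; exists (a k).
have Wf : forall X, W (f X) by apply: pratt_embed.
split.
  exists f; split => // X Y fXY.
  by apply/seteqP; split; apply/f_subset; rewrite fXY.
exists (range f); split; last by exists f.
apply: complete_sublattice_range => // G G0.
  exact: embed_bigcup.
exact: embed_bigcap.
Qed.
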